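(* Let $\mathbb{F}$ be any field and let $q\in\mathbb{F}$ with $q\neq 0$. Then the tensor rank of $\langle 2,2,2\rangle_q$ over $\mathbb{F}$ is at least $7$.
   Context: Let $e_{ij}$ ($i,j\in\{1,2\}$) be the standard basis of $\mathbb{F}^{2\times 2}$ and $\langle 2,2,2\rangle=\sum_{i,j,k\in\{1,2\}} e_{ij}\otimes e_{jk}\otimes e_{ki}$. For $q\in\mathbb{F}$, the perturbed matrix multiplication tensor is $\langle 2,2,2\rangle_q=\langle 2,2,2\rangle+(q-1)\,e_{11}\otimes e_{11}\otimes e_{11}$, i.e. $\langle 2,2,2\rangle$ with the coefficient of $e_{11}\otimes e_{11}\otimes e_{11}$ replaced by $q$. Tensor rank is the minimal number of simple tensors $v_1\otimes v_2\otimes v_3$ summing to the tensor. *)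

From HB Require Import structures.
From mathcomp Require Import all_boot all_order all_algebra.
Set Implicit Arguments. Unset Strict Implicit. Unset Printing Implicit Defensive.
Import GRing.Theory.
Local Open Scope ring_scope.

(* Index of the standard basis e_ij of F^{2x2}: a pair (i, j) : 'I_2 * 'I_2. *)
Definition idx := ('I_2 * 'I_2)%type.

(* A tensor in F^{2x2} (x) F^{2x2} (x) F^{2x2}, given by its coordinates
   with respect to the basis e_a (x) e_b (x) e_c. *)
Definition tensor3 (F : fieldType) := idx -> idx -> idx -> F.

(* <2,2,2> = sum_{i,j,k} e_ij (x) e_jk (x) e_ki : coordinate 1 at
   ((i,j),(j,k),(k,i)), 0 elsewhere. *)
Definition mm222 (F : fieldType) : tensor3 F :=
  fun a b c => if [&& a.2 == b.1, b.2 == c.1 & c.2 == a.1] then 1 else 0.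

Definition e11 : idx := (ord0, ord0).
Definition mm222q (F : fieldType) (q : F) : tensor3 F :=
  fun a b c => mm222 F a b c +
    (if [&& a == e11, b == e11 & c == e11] then q - 1 else 0).

Definition rank_decomp (F : fieldType) (T : tensor3 F) (r : nat) : Prop :=
  exists (u v w : 'I_r -> idx -> F),
    forall a b c, T a b c = \sum_(l < r) u l a * v l b * w l c.

From HB Require Import structures.
From mathcomp Require Import all_boot all_order all_algebra.
From mathcomp Require Import ring zify.
Import GRing.Theory.
Local Open Scope ring_scope.
Set Implicit Arguments. Unset Strict Implicit. Unset Printing Implicit Defensive.

(* Write u_l = [a0 l | a1 l] by columns and v_l = [b0 l; b1 l] by rows, and let W have the
   flattened w_l as rows.  As e_ij (x) e_jk pairs column j of u_l only with row j of v_l, a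
   decomposition of length 6 splits into four blocks: with M_jj' the matrix whose row l is
   a_j l^T b_j' l (flattened), M_jj'^T W is invertible for j = j' (a permuted diagonal matrix
   with weights 1 and q) and vanishes for j <> j'.  So M00 and M11 have rank 4, hence at most
   two degenerate rows each, while the rows of S = [M01 | M10] lie in the 2-dimensional kernel
   of W^T.  Pairs of rank-one matrices spanning so small a space are very constrained: off the
   degenerate rows of the other block, the rows of M00 or of M11 end up in a space of dimension
   at most 2 (at most 1 when M00 has two degenerate rows), contradicting rank 4. *)

Section MatrixRank.
Variable F : fieldType.

Lemma unitmx_of_col_inj n (A : 'M[F]_n) :
  (forall z : 'cV_n, A *m z = 0 -> z = 0) -> A \in unitmx.
Proof.
move=> injA; rewrite -unitmx_tr unitmxE unitfE; apply/negP => /det0P[v nz_v].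
move/(congr1 trmx); rewrite trmx_mul !trmxK trmx0 => /injA/(congr1 trmx).
by rewrite trmxK trmx0 => v0; rewrite v0 eqxx in nz_v.
Qed.

Lemma mxrank_unit_mul m n (A : 'M[F]_(m, n)) (B : 'M[F]_(n, m)) :
  A *m B \in unitmx -> \rank A = m /\ \rank B = m.
Proof.
move/mxrank_unit => rAB; split; apply/eqP; rewrite eqn_leq.
  by rewrite rank_leq_row -{1}rAB mxrankM_maxl.
by rewrite rank_leq_col -{1}rAB mxrankM_maxr.
Qed.

Lemma mxrank_rows_sub m n k (M : 'M[F]_(m, n)) (V : 'M[F]_(k, n)) (B : {set 'I_m}) :
  (forall l, l \notin B -> (row l M <= V)%MS) -> (\rank M <= \rank V + #|B|)%N.
Proof.
move=> sMV; pose MB := \matrix_(i < #|B|) row (enum_val i) M.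
have sM : (M <= V + MB)%MS.
  apply/row_subP => l; have [lB | /sMV] := boolP (l \in B); last first.
    by move/submx_trans; apply; apply: addsmxSl.
  apply: submx_trans (addsmxSr V MB).
  have -> : row l M = row (enum_rank_in lB l) MB by rewrite rowK enum_rankK_in.
  exact: row_sub.
apply: leq_trans (mxrankS sM) _; apply: leq_trans (mxrank_adds_leqif V MB) _.
by rewrite leq_add2l rank_leq_row.
Qed.

Lemma sub_adds_rVP n (u v w : 'rV[F]_n) :
  reflect (exists c1 c2, u = c1 *: v + c2 *: w) (u <= v + w)%MS.
Proof.
apply: (iffP sub_addsmxP) => [[[c1 c2] /= ->] | [c1 [c2 ->]]].
  by exists (c1 0 0), (c2 0 0); rewrite {1}(mx11_scalar c1) {1}(mx11_scalar c2) !mul_scalar_mx.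
by exists (c1%:M, c2%:M); rewrite /= !mul_scalar_mx.
Qed.

Lemma rank2_row_span m n (S : 'M[F]_(m, n)) a :
  (\rank S <= 2)%N -> row a S != 0 -> exists b, (S <= row a S + row b S)%MS.
Proof.
move=> rS nz_a; have [Sa | /row_subPn[b nba]] := boolP (S <= row a S)%MS.
  by exists a; apply: submx_trans Sa (addsmxSl _ _).
exists b; have sabS : (row a S + row b S <= S)%MS by rewrite addsmx_sub !row_sub.
rewrite -(geq_leqif (mxrank_leqif_sup sabS)); apply: leq_trans rS _.
have := ltn_leqif (mxrank_leqif_sup (addsmxSl (row a S) (row b S))).
by rewrite addsmx_sub submx_refl (negbTE nba) rank_rV nz_a => ->.
Qed.

Lemma sum_lift2 (V : nmodType) n (f : 'I_n.+2 -> V) o1 o2 :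
  \sum_l f l = f o1 + f (lift o1 o2) + \sum_i f (lift o1 (lift o2 i)).
Proof. by rewrite (bigD1_ord o1) //= (bigD1_ord o2) //= addrA. Qed.

(* The rows of W away from o1 and o2 form an invertible matrix, since the vanishing rows of M
   do not contribute to M^T *m W; its inverse provides the relation among the rows of S. *)
Lemma rows_span_of_unit_mul n m (M W : 'M[F]_(n.+2, n)) (S : 'M[F]_(n.+2, m)) o1 o2 :
  M^T *m W \in unitmx -> row o1 M = 0 -> row (lift o1 o2) M = 0 -> S^T *m W = 0 ->
  forall l, (row l S <= row o1 S + row (lift o1 o2) S)%MS.
Proof.
move=> unitMW M1 M2 SW l; pose g (i : 'I_n) : 'I_n.+2 := lift o1 (lift o2 i).
have comb p (v : 'cV[F]_n.+2) (N : 'M[F]_(n.+2, p)) :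
    v^T *m N = v o1 0 *: row o1 N + v (lift o1 o2) 0 *: row (lift o1 o2) N
               + \sum_i v (g i) 0 *: row (g i) N.
  rewrite mulmx_sum_row (sum_lift2 _ o1 o2) !mxE; congr (_ + _).
  by apply: eq_bigr => i _; rewrite mxE.
pose W' : 'M[F]_n := rowsub g W.
have unitW' : W' \in unitmx.
  apply: unitmx_of_col_inj => z W'z0.
  suff Gz0 : M^T *m (W *m z) = 0 by rewrite -[z](mulKmx unitMW) -mulmxA Gz0 mulmx0.
  apply/trmx_inj; rewrite trmx_mul trmxK trmx0 comb M1 M2 !scaler0 !add0r big1 // => i _.
  have := congr1 (fun N : 'cV[F]_n => N i 0) W'z0.
  by rewrite mul_rowsub_mx !mxE => ->; rewrite scale0r.
case: (unliftP o1 l) => [j ->|->]; last exact: addsmxSl.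
case: (unliftP o2 j) => [i ->|->]; last exact: addsmxSr.
pose v : 'cV[F]_n.+2 := W *m (invmx W' *m delta_mx i 0).
have vg k : v (g k) 0 = (k == i)%:R.
  have -> : v (g k) 0 = rowsub g v k 0 by rewrite [RHS]mxE.
  by rewrite -mul_rowsub_mx mulmxA mulmxV // mul1mx mxE eqxx andbT.
have : v^T *m S = 0 by rewrite -[LHS]trmxK trmx_mul trmxK /v mulmxA SW mul0mx trmx0.
rewrite comb (bigD1 i) //= big1 => [|k /negbTE ki]; last by rewrite vg ki scale0r.
rewrite vg eqxx scale1r addr0 => e.
apply/sub_adds_rVP; exists (- v o1 0), (- v (lift o1 o2) 0).
by rewrite !scaleNr -opprD; apply/eqP; rewrite -addr_eq0 addrC e.
Qed.

End MatrixRank.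

Lemma ord2P (j : 'I_2) : j = ord0 \/ j = ord_max.
Proof. by case: j => [[|[|]]] // ?; [left | right]; apply/val_inj. Qed.

Section Outer.
Variable F : fieldType.
Implicit Types u v x y : 'rV[F]_2.

Definition outer u v : 'M[F]_2 := u^T *m v.

Lemma outerE u v i j : outer u v i j = u 0 i * v 0 j.
Proof. by rewrite !mxE big_ord1 !mxE. Qed.

Lemma outerZl c u v : outer (c *: u) v = c *: outer u v.
Proof. by rewrite /outer linearZ scalemxAl. Qed.

Lemma outerZr c u v : outer u (c *: v) = c *: outer u v.
Proof. by rewrite /outer scalemxAr. Qed.

Lemma outer0l v : outer 0 v = 0.
Proof. by rewrite /outer trmx0 mul0mx. Qed.

Lemma outer0r u : outer u 0 = 0.
Proof. by rewrite /outer mulmx0. Qed.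

Lemma tr_outer u v : (outer u v)^T = outer v u.
Proof. by rewrite /outer trmx_mul trmxK. Qed.

Lemma rV_neq0P n (v : 'rV[F]_n) : reflect (exists k, v 0 k != 0) (v != 0).
Proof.
apply: (iffP idP) => [nz_v | [k]]; last by apply: contraNneq => ->; rewrite mxE.
apply/existsP; apply: contraR nz_v => /existsPn v0.
by apply/eqP/rowP => k; rewrite mxE; apply/eqP/negbNE/v0.
Qed.

Lemma outer_eq0 u v : (outer u v == 0) = (u == 0) || (v == 0).
Proof.
apply/idP/idP => [|/orP[]/eqP->]; [|by rewrite outer0l|by rewrite outer0r].
apply: contraLR; rewrite negb_or => /andP[/rV_neq0P[i ui] /rV_neq0P[k vk]].
apply/eqP => /matrixP/(_ i k); rewrite outerE mxE => /eqP.
by rewrite mulf_eq0 (negbTE ui) (negbTE vk).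
Qed.

Lemma outer_colinear_l u v x y : outer u v = outer x y -> v != 0 -> exists r, u = r *: x.
Proof.
move=> e /rV_neq0P[k vk]; exists (y 0 k / v 0 k); apply/rowP => i.
apply: (mulIf vk); have /matrixP/(_ i k) := e; rewrite !outerE !mxE => ->.
by rewrite mulrAC divfK // mulrC.
Qed.

Lemma outer_colinear_r u v x y : outer u v = outer x y -> u != 0 -> exists r, v = r *: y.
Proof. by move/(congr1 trmx); rewrite !tr_outer; apply: outer_colinear_l. Qed.

Lemma rV2_colinear x x' : x != 0 ->
  x 0 ord0 * x' 0 ord_max = x 0 ord_max * x' 0 ord0 -> exists k, x' = k *: x.
Proof.
move=> /rV_neq0P[k xk] cross0; exists (x' 0 k / x 0 k); apply/rowP => j.
rewrite mxE; apply: (mulIf xk); rewrite mulrAC divfK //.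
by case: (ord2P j) => ->; case: (ord2P k) => -> //; rewrite [LHS]mulrC [RHS]mulrC cross0.
Qed.

Lemma rank_one_outer_sum x0 y0 x1 y1 x2 y2 c1 c2 :
  outer x0 y0 = c1 *: outer x1 y1 + c2 *: outer x2 y2 ->
  c1 != 0 -> c2 != 0 -> x1 != 0 -> y1 != 0 ->
  (exists k, x2 = k *: x1) \/ (exists k, y2 = k *: y1).
Proof.
move=> e c1_nz c2_nz /rV2_colinear colx /rV2_colinear coly.
have E i j : x0 0 i * y0 0 j = c1 * (x1 0 i * y1 0 j) + c2 * (x2 0 i * y2 0 j).
  by have := congr1 (fun M : 'M[F]_2 => M i j) e; rewrite !mxE !big_ord1 !mxE => ->.
have : c1 * c2 * ((x1 0 ord0 * x2 0 ord_max - x1 0 ord_max * x2 0 ord0) *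
                  (y1 0 ord0 * y2 0 ord_max - y1 0 ord_max * y2 0 ord0)) = 0.
  have det0 : (x0 0 ord0 * y0 0 ord0) * (x0 0 ord_max * y0 0 ord_max)
            - (x0 0 ord0 * y0 0 ord_max) * (x0 0 ord_max * y0 0 ord0) = 0 by ring.
  by move: det0; rewrite !E => <-; ring.
move/eqP; rewrite !mulf_eq0 (negbTE c1_nz) (negbTE c2_nz) !subr_eq0 /=.
by case/orP => /eqP; [left; apply: colx | right; apply: coly].
Qed.

Lemma outer_sum_colinear_l u v x1 y1 x2 y2 c1 c2 :
  outer u v = c1 *: outer x1 y1 + c2 *: outer x2 y2 -> v != 0 ->
  (x1 == 0) || (x2 == 0) -> exists r, u = r *: (x1 + x2).
Proof.
move=> e nz_v /orP[]/eqP x0; move: e; rewrite x0 outer0l scaler0 -outerZr;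
  by rewrite ?add0r ?addr0 => /outer_colinear_l/(_ nz_v).
Qed.

Lemma outer_sum_colinear_r u v x1 y1 x2 y2 c1 c2 :
  outer u v = c1 *: outer x1 y1 + c2 *: outer x2 y2 -> u != 0 ->
  (y1 == 0) || (y2 == 0) -> exists r, v = r *: (y1 + y2).
Proof.
move/(congr1 trmx); rewrite linearD !linearZ /= !tr_outer.
exact: outer_sum_colinear_l.
Qed.

Definition outer_span_l x : 'M[F]_(2, 2 * 2) := \matrix_j mxvec (outer x (delta_mx 0 j)).
Definition outer_span_r y : 'M[F]_(2, 2 * 2) := \matrix_j mxvec (outer (delta_mx 0 j) y).

Lemma outer_span_l_sub x v : (mxvec (outer x v) <= outer_span_l x)%MS.
Proof.
have -> : mxvec (outer x v) = v *m outer_span_l x.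
  rewrite mulmx_sum_row {1}(row_sum_delta v) /outer mulmx_sumr linear_sum.
  by apply: eq_bigr => k _; rewrite rowK -scalemxAr linearZ.
exact: submxMl.
Qed.

Lemma outer_span_r_sub y v : (mxvec (outer v y) <= outer_span_r y)%MS.
Proof.
have -> : mxvec (outer v y) = v *m outer_span_r y.
  rewrite mulmx_sum_row {1}(row_sum_delta v) /outer linear_sum mulmx_suml linear_sum.
  by apply: eq_bigr => k _; rewrite rowK linearZ /= -scalemxAl linearZ.
exact: submxMl.
Qed.

End Outer.

Section OuterRows.
Variables (F : fieldType) (n : nat).
Implicit Types a b : 'I_n -> 'rV[F]_2.

Definition outer_rows a b : 'M[F]_(n, 2 * 2) := \matrix_l mxvec (outer (a l) (b l)).

Definition degenerate a b : {set 'I_n} := [set l | (a l == 0) || (b l == 0)].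

Lemma row_outer_rows a b l : row l (outer_rows a b) = mxvec (outer (a l) (b l)).
Proof. by rewrite rowK. Qed.

Lemma row_outer_rows_eq0 a b l : (row l (outer_rows a b) == 0) = (l \in degenerate a b).
Proof. by rewrite row_outer_rows mxvec_eq0 outer_eq0 inE. Qed.

Lemma notin_degenerate a b l : l \notin degenerate a b -> a l != 0 /\ b l != 0.
Proof. by rewrite inE negb_or => /andP. Qed.

Definition mixed_rows a0 a1 b0 b1 := row_mx (outer_rows a0 b1) (outer_rows a1 b0).

Lemma row_mixed_rows_neq0 a0 a1 b0 b1 l :
  l \notin degenerate a0 b0 -> l \notin degenerate a1 b1 ->
  row l (mixed_rows a0 a1 b0 b1) != 0.
Proof.
move=> /notin_degenerate[a0l _] /notin_degenerate[_ b1l].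
by rewrite row_row_mx row_mx_eq0 row_outer_rows_eq0 inE (negbTE a0l) (negbTE b1l).
Qed.

Lemma row_mixed_rows_comb a0 a1 b0 b1 l x y c1 c2 :
  let S := mixed_rows a0 a1 b0 b1 in
  row l S = c1 *: row x S + c2 *: row y S ->
  outer (a0 l) (b1 l) = c1 *: outer (a0 x) (b1 x) + c2 *: outer (a0 y) (b1 y) /\
  outer (a1 l) (b0 l) = c1 *: outer (a1 x) (b0 x) + c2 *: outer (a1 y) (b0 y).
Proof.
rewrite /= !row_row_mx !row_outer_rows !scale_row_mx add_row_mx => /eq_row_mx[e01 e10].
by split; apply: (can_inj mxvecK); rewrite linearD !linearZ.
Qed.

Lemma row_mixed_rows_line a0 a1 b0 b1 l x d :
  let S := mixed_rows a0 a1 b0 b1 in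
  l \notin degenerate a0 b0 -> l \notin degenerate a1 b1 -> row l S = d *: row x S ->
  (mxvec (outer (a0 l) (b0 l)) <= row x (outer_rows a0 b0))%MS.
Proof.
move=> S /notin_degenerate[_ b0l] /notin_degenerate[a1l b1l] e.
have [] := @row_mixed_rows_comb a0 a1 b0 b1 l x x d 0; first by rewrite e scale0r addr0.
rewrite !scale0r !addr0 -outerZr -outerZl => /outer_colinear_l/(_ b1l)[r ->].
move=> /outer_colinear_r/(_ a1l)[r' ->].
by rewrite outerZl outerZr !linearZ /= -row_outer_rows !scalemx_sub.
Qed.

Lemma unit_outer_rows_cover a b (W : 'M[F]_(n, 2 * 2)) k (V : 'M[F]_(k, 2 * 2))
    (B : {set 'I_n}) :
  (outer_rows a b)^T *m W \in unitmx ->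
  (forall l, l \notin B -> l \notin degenerate a b -> (mxvec (outer (a l) (b l)) <= V)%MS) ->
  (4 <= \rank V + #|B|)%N.
Proof.
move=> /mxrank_unit_mul[rM _] sV.
have <- : \rank (outer_rows a b) = 4%N by rewrite -mxrank_tr rM.
apply: mxrank_rows_sub => l lB.
have [/eqP-> | ] := boolP (row l (outer_rows a b) == 0); first exact: sub0mx.
by rewrite row_outer_rows_eq0 row_outer_rows; apply: sV.
Qed.

Lemma card_degenerate_unit a b (W : 'M[F]_(n, 2 * 2)) :
  (outer_rows a b)^T *m W \in unitmx -> (#|degenerate a b| + 4 <= n)%N.
Proof.
move=> unitMW.
have cover l : l \notin ~: degenerate a b -> l \notin degenerate a b ->
    (mxvec (outer (a l) (b l)) <= (0 : 'M[F]_(1, 2 * 2)))%MS.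
  by rewrite inE negbK => ->.
have := unit_outer_rows_cover unitMW cover.
rewrite mxrank0 add0n [#|~: _|]cardsCs setCK card_ord; lia.
Qed.

End OuterRows.

Section Block.
Variables (F : fieldType) (a0 a1 b0 b1 : 'I_6 -> 'rV[F]_2) (W : 'M[F]_(6, 2 * 2)).
Hypothesis unit00 : (outer_rows a0 b0)^T *m W \in unitmx.
Hypothesis ann01 : (outer_rows a0 b1)^T *m W = 0.
Hypothesis ann10 : (outer_rows a1 b0)^T *m W = 0.
Local Notation S := (mixed_rows a0 a1 b0 b1).

Lemma mixed_rows_ann : S^T *m W = 0.
Proof. by rewrite tr_row_mx mul_col_mx ann01 ann10 col_mx0. Qed.

Lemma rank_mixed_rows : (\rank S <= 2)%N.
Proof.
have [_ rW] := mxrank_unit_mul unit00.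
have /mxrankS : (S^T <= kermx W)%MS by apply/sub_kermxP; exact: mixed_rows_ann.
by rewrite mxrank_tr mxrank_ker rW.
Qed.

Lemma two_degenerate_contra o1 o2 :
  o1 != o2 -> o1 \in degenerate a0 b0 -> o2 \in degenerate a0 b0 ->
  (#|degenerate a1 b1| <= 2)%N -> False.
Proof.
move=> o12 o1D o2D card1.
have [o2' o2E] : exists o2', o2 = lift o1 o2'.
  by case: (unliftP o1 o2) o12 => [j ->|->]; [exists j | rewrite eqxx].
have span l : (row l S <= row o1 S + row o2 S)%MS.
  rewrite o2E; apply: (rows_span_of_unit_mul unit00 _ _ mixed_rows_ann);
  by apply/eqP; rewrite row_outer_rows_eq0 -?o2E.
(* a0 or b0 vanishes at o1 and at o2, so relations among the rows of S pin a0 l to the line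
   of x and b0 l to that of y. *)
pose x := a0 o1 + a0 o2; pose y := b0 o1 + b0 o2.
suff /(unit_outer_rows_cover unit00) : forall l, l \notin degenerate a1 b1 ->
    l \notin degenerate a0 b0 -> (mxvec (outer (a0 l) (b0 l)) <= mxvec (outer x y))%MS.
  by have := rank_leq_row (mxvec (outer x y)); lia.
move=> l /notin_degenerate[a1l b1l] /notin_degenerate[a0l b0l].
have /sub_adds_rVP[c1 [c2 /row_mixed_rows_comb[e01 e10]]] := span l.
move: o1D o2D; rewrite !inE => o1D o2D.
have [r ->] : exists r, a0 l = r *: x.
  apply: (outer_sum_colinear_l e01 b1l).
  rewrite -[_ || _]negbK negb_or; apply/negP => /andP[/negbTE a01 /negbTE a02].
  move: o1D o2D; rewrite a01 a02 /= => /eqP b01 /eqP b02.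
  move/eqP: e10; rewrite b01 b02 !outer0r !scaler0 addr0 outer_eq0.
  by rewrite (negbTE a1l) (negbTE b0l).
have [r' ->] : exists r', b0 l = r' *: y.
  apply: (outer_sum_colinear_r e10 a1l).
  rewrite -[_ || _]negbK negb_or; apply/negP => /andP[/negbTE b01 /negbTE b02].
  move: o1D o2D; rewrite b01 b02 !orbF => /eqP a01 /eqP a02.
  move/eqP: e01; rewrite a01 a02 !outer0l !scaler0 addr0 outer_eq0.
  by rewrite (negbTE a0l) (negbTE b1l).
by rewrite outerZl outerZr scalerA linearZ scalemx_sub.
Qed.

End Block.

Section Core.
Variables (F : fieldType) (a0 a1 b0 b1 : 'I_6 -> 'rV[F]_2) (W : 'M[F]_(6, 2 * 2)).
Hypothesis unit00 : (outer_rows a0 b0)^T *m W \in unitmx.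
Hypothesis unit11 : (outer_rows a1 b1)^T *m W \in unitmx.
Hypothesis ann01 : (outer_rows a0 b1)^T *m W = 0.
Hypothesis ann10 : (outer_rows a1 b0)^T *m W = 0.
Local Notation S := (mixed_rows a0 a1 b0 b1).
Local Notation D0 := (degenerate a0 b0).
Local Notation D1 := (degenerate a1 b1).

(* A rank-one matrix that is a genuine combination of two rank-one matrices forces those to
   share a left or a right factor; then all a0 l (or all b1 l) are proportional. *)
Lemma mixed_comb_contra a b c c1 c2 :
  a \notin D0 -> a \notin D1 -> (S <= row a S + row b S)%MS ->
  row c S = c1 *: row a S + c2 *: row b S -> c1 != 0 -> c2 != 0 ->
  (#|D0| <= 1)%N -> (#|D1| <= 1)%N -> False.
Proof.
move=> /notin_degenerate[a0a _] /notin_degenerate[_ b1a] Sab ec c1_nz c2_nz card0 card1.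
have comb l : exists d1 d2,
    outer (a0 l) (b1 l) = d1 *: outer (a0 a) (b1 a) + d2 *: outer (a0 b) (b1 b).
  have /sub_adds_rVP[d1 [d2 /row_mixed_rows_comb[e01 _]]] := submx_trans (row_sub l S) Sab.
  by exists d1, d2.
have [e01 _] := row_mixed_rows_comb ec.
case: (rank_one_outer_sum e01 c1_nz c2_nz a0a b1a) => [[k a0b] | [k b1b]].
  suff /(unit_outer_rows_cover unit00) : forall l, l \notin D1 -> l \notin D0 ->
      (mxvec (outer (a0 l) (b0 l)) <= outer_span_l (a0 a))%MS.
    by have := rank_leq_row (outer_span_l (a0 a)); lia.
  move=> l /notin_degenerate[_ b1l] _; have [d1 [d2 e]] := comb l.
  have [r ->] : exists r, a0 l = r *: a0 a.
    apply: (outer_colinear_l (y := d1 *: b1 a + (d2 * k) *: b1 b)) b1l.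
    by rewrite e a0b; apply/matrixP => i j; rewrite !mxE !big_ord1 !mxE; ring.
  by rewrite outerZl linearZ scalemx_sub // outer_span_l_sub.
suff /(unit_outer_rows_cover unit11) : forall l, l \notin D0 -> l \notin D1 ->
    (mxvec (outer (a1 l) (b1 l)) <= outer_span_r (b1 a))%MS.
  by have := rank_leq_row (outer_span_r (b1 a)); lia.
move=> l /notin_degenerate[a0l _] _; have [d1 [d2 e]] := comb l.
have [r ->] : exists r, b1 l = r *: b1 a.
  apply: (outer_colinear_r (x := d1 *: a0 a + (d2 * k) *: a0 b)) a0l.
  by rewrite e b1b; apply/matrixP => i j; rewrite !mxE !big_ord1 !mxE; ring.
by rewrite outerZr linearZ scalemx_sub // outer_span_r_sub.
Qed.

Lemma few_degenerate_contra : (#|D0| <= 1)%N -> (#|D1| <= 1)%N -> False.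
Proof.
move=> card0 card1.
have /card_gt0P[a] : (0 < #|~: (D0 :|: D1)|)%N.
  have := cardsC (D0 :|: D1); have := (leq_card_setU D0 D1).1; rewrite card_ord; lia.
rewrite in_setC in_setU negb_or => /andP[aD0 aD1].
have [b Sab] :=
  rank2_row_span (rank_mixed_rows unit00 ann01 ann10) (row_mixed_rows_neq0 aD0 aD1).
have [/forallP lines | /forallPn[c]] :=
  boolP [forall l, (row l S <= row a S)%MS || (row l S <= row b S)%MS].
  suff /(unit_outer_rows_cover unit00) : forall l, l \notin D1 -> l \notin D0 ->
      (mxvec (outer (a0 l) (b0 l)) <= row a (outer_rows a0 b0) + row b (outer_rows a0 b0))%MS.
    have := (mxrank_adds_leqif (row a (outer_rows a0 b0)) (row b (outer_rows a0 b0))).1.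
    have := rank_leq_row (row a (outer_rows a0 b0)).
    by have := rank_leq_row (row b (outer_rows a0 b0)); lia.
  move=> l l1 l0; case/orP: (lines l) => /sub_rVP[d /(row_mixed_rows_line l0 l1)].
    by move/submx_trans; apply; apply: addsmxSl.
  by move/submx_trans; apply; apply: addsmxSr.
rewrite negb_or => /andP[nca ncb].
have /sub_adds_rVP[c1 [c2 ec]] := submx_trans (row_sub c S) Sab.
apply: (mixed_comb_contra aD0 aD1 Sab ec _ _ card0 card1).
  by apply: contraNneq ncb => c1_0; apply/sub_rVP; exists c2; rewrite ec c1_0 scale0r add0r.
by apply: contraNneq nca => c2_0; apply/sub_rVP; exists c1; rewrite ec c2_0 scale0r addr0.
Qed.

Lemma block_decomposition_contra : False.
Proof.
have := card_degenerate_unit unit00; have := card_degenerate_unit unit11 => card1 card0.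
have [card0'|/card_gt1P[o1 [o2 [o1D o2D o12]]]] := leqP #|D0| 1; last first.
  by apply: (two_degenerate_contra unit00 ann01 ann10 o12 o1D o2D); lia.
have [card1'|/card_gt1P[o1 [o2 [o1D o2D o12]]]] := leqP #|D1| 1; last first.
  by apply: (two_degenerate_contra unit11 ann10 ann01 o12 o1D o2D); lia.
exact: few_degenerate_contra.
Qed.

End Core.

Lemma rank_decomp_widen (F : fieldType) (T : tensor3 F) r s :
  rank_decomp T r -> (r <= s)%N -> rank_decomp T s.
Proof.
move=> [u [v [w dec]]] rs.
pose ext (f : 'I_r -> idx -> F) (l : 'I_s) a := oapp (f^~ a) 0 (insub (val l)).
exists (ext u), (ext v), (ext w) => a b c.
pose g k := oapp (fun l => u l a * v l b * w l c) 0 (insub k).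
rewrite dec (eq_bigr (g \o val)) => [|l _]; last by rewrite /g /= valK.
rewrite (big_ord_widen s g rs) big_mkcond; apply: eq_bigr => l _.
by rewrite /ext /g; case: insubP => [l' -> _ | /negbTE ->] /=; rewrite ?mul0r.
Qed.

Lemma mm222qE (F : fieldType) (q : F) i j j' k x y :
  mm222q q (i, j) (j', k) (x, y) =
  ((j == j') && ((x, y) == (k, i)))%:R *
  (if [&& i == ord0, j == ord0 & k == ord0] then q else 1).
Proof.
have n01 : (ord0 == ord_max :> 'I_2) = false by [].
have n10 : (ord_max == ord0 :> 'I_2) = false by [].
rewrite /mm222q /mm222 /e11 /= !xpair_eqE.
case: (ord2P i) => ->; case: (ord2P j) => ->; case: (ord2P j') => ->;
case: (ord2P k) => ->; case: (ord2P x) => ->; case: (ord2P y) => ->;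
rewrite ?eqxx ?n01 ?n10 /=; ring.
Qed.

Lemma outer_rows_mulmxE (F : fieldType) n (a b : 'I_n -> 'rV[F]_2) (W : 'M[F]_(n, 2 * 2))
    i k t :
  ((outer_rows a b)^T *m W) (mxvec_index i k) t = \sum_l a l 0 i * b l 0 k * W l t.
Proof. by rewrite mxE; apply: eq_bigr => l _; rewrite !mxE mxvecE outerE. Qed.

Lemma unitmx_weighted_transpose (F : fieldType) (G : 'M[F]_(2 * 2)) (s : 'I_2 -> 'I_2 -> F) :
  (forall i k, s i k != 0) ->
  (forall i k x y, G (mxvec_index i k) (mxvec_index x y) = ((x, y) == (k, i))%:R * s i k) ->
  G \in unitmx.
Proof.
move=> s_nz GE; rewrite unitmxE unitfE; apply/negP => /det0P[v nz_v vG0].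
suff v0 : v = 0 by rewrite v0 eqxx in nz_v.
apply/rowP => t; case/mxvec_indexP: t => i k; rewrite mxE.
have := congr1 (fun u : 'rV[F]_(2 * 2) => u 0 (mxvec_index k i)) vG0.
rewrite !mxE (bigD1 (mxvec_index i k)) //= GE eqxx mul1r big1 ?addr0 => [/eqP | t].
  by rewrite mulf_eq0 (negbTE (s_nz i k)) orbF => /eqP.
case/mxvec_indexP: t => i' k' ne; rewrite GE.
by case: eqP => [[kk ii] | _]; [rewrite kk ii eqxx in ne | rewrite mul0r mulr0].
Qed.

Unset Implicit Arguments.

Theorem mainTheorem4 (F : fieldType) (q : F) (hq : q != 0) (r : nat) :
  rank_decomp (mm222q q) r -> (7 <= r)%N.
Proof.
move=> dec; rewrite leqNgt; apply/negP => r_le6.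
have [U [V [Wc dec6]]] := rank_decomp_widen dec (r_le6 : (r <= 6)%N).
pose a j l : 'rV[F]_2 := \row_i U l (i, j).
pose b j l : 'rV[F]_2 := \row_k V l (j, k).
pose W : 'M[F]_(6, 2 * 2) := \matrix_l mxvec (\matrix_(x, y) Wc l (x, y)).
pose s (j i k : 'I_2) := if [&& i == ord0, j == ord0 & k == ord0] then q else 1.
have blockE j j' i k x y :
    ((outer_rows (a j) (b j'))^T *m W) (mxvec_index i k) (mxvec_index x y) =
    ((j == j') && ((x, y) == (k, i)))%:R * s j i k.
  rewrite outer_rows_mulmxE -mm222qE dec6; apply: eq_bigr => l _.
  by rewrite !mxE mxvecE mxE.
have unit_diag j : (outer_rows (a j) (b j))^T *m W \in unitmx.
  apply: (unitmx_weighted_transpose (s := s j)) => [i k | i k x y]; last by rewrite blockE eqxx.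
  by rewrite /s; case: ifP; rewrite ?oner_neq0.
have ann j j' : j != j' -> (outer_rows (a j) (b j'))^T *m W = 0.
  move=> /negbTE jj'; apply/matrixP => t t'.
  case/mxvec_indexP: t => i k; case/mxvec_indexP: t' => x y.
  by rewrite blockE jj' mxE mul0r.
exact: (block_decomposition_contra (unit_diag ord0) (unit_diag ord_max)
  (ann ord0 ord_max isT) (ann ord_max ord0 isT)).
Qed.
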